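(* For all $x,y\in\mathbb{B}^2$, $$|x-y|\le 2\,\operatorname{th}\frac{h_{\mathbb{B}^2}(x,y)}{4},$$ with equality when $x=-y$.
   Context: $\mathbb{B}^2$ is the open unit disk in $\mathbb{C}$; $\operatorname{th}$ is the hyperbolic tangent. For distinct $x,y\in\mathbb{B}^2$ the Hilbert metric is $h_{\mathbb{B}^2}(x,y)=\log\frac{|u-y||x-v|}{|u-x||y-v|}$, where $u,v$ are the intersection points of the line through $x,y$ with the unit circle, labelled so that $|u-x|<|u-y|$; also $h_{\mathbb{B}^2}(x,x)=0$. *)

From Stdlib Require Import Reals.
From Coquelicot Require Import Coquelicot.
Open Scope R_scope.

Definition in_disk (z : C) : Prop := Cmod z < 1.

(* The line through x and y (x <> y) is parametrized as x + t (y - x).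
   Its intersection with the unit circle |z| = 1 is given by the roots of
   a t^2 + b t + c = 0 with a = |y-x|^2, b = 2 Re(x * conj(y-x)),
   c = |x|^2 - 1.  For x, y in the disk, c < 0, so the roots satisfy
   t_u < 0 < 1 < t_v. *)
Definition hq_a (x y : C) : R := Cmod (y - x)%C ^ 2.
Definition hq_b (x y : C) : R :=
  2 * (fst x * fst (y - x)%C + snd x * snd (y - x)%C).
Definition hq_c (x : C) : R := Cmod x ^ 2 - 1.
Definition hq_disc (x y : C) : R := hq_b x y ^ 2 - 4 * hq_a x y * hq_c x.

Definition t_u (x y : C) : R := (- hq_b x y - sqrt (hq_disc x y)) / (2 * hq_a x y).
Definition t_v (x y : C) : R := (- hq_b x y + sqrt (hq_disc x y)) / (2 * hq_a x y).

(* u: the intersection point of the line with the unit circle on the side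
   of x (so |u - x| < |u - y|); v: the one on the side of y. *)
Definition end_u (x y : C) : C := (x + RtoC (t_u x y) * (y - x))%C.
Definition end_v (x y : C) : C := (x + RtoC (t_v x y) * (y - x))%C.

Definition hilbert_disk (x y : C) : R :=
  match Ceq_dec x y with
  | left _ => 0
  | right _ =>
      ln ((Cmod (end_u x y - y)%C * Cmod (x - end_v x y)%C) /
          (Cmod (end_u x y - x)%C * Cmod (y - end_v x y)%C))
  end.

(* Parametrize the line through x and y as x + t (y - x) and let t_u < 0 < 1 < t_v be the
   parameters of its endpoints on the unit circle.  With d = |x - y|, a = |u - x| and
   b = |y - v|, the Hilbert distance is ln ((a + d)(d + b) / (a b)), and the chord has length
   a + d + b <= 2.  Under this constraint the cross ratio is smallest when a = b = (2 - d)/2,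
   where it equals ((2 + d)/(2 - d))^2; since tanh (ln K / 4) = (sqrt K - 1)/(sqrt K + 1),
   this minimum corresponds exactly to 2 tanh (h / 4) = d.  For x = -y the chord is a
   diameter centred at the midpoint of [x, y], so a = b and equality holds. *)

From Stdlib Require Import Reals Lra Psatz.
From Coquelicot Require Import Coquelicot.
Open Scope R_scope.

Lemma tanh_0 : tanh 0 = 0.
Proof. unfold tanh, sinh. rewrite Ropp_0, Rminus_diag. unfold Rdiv. ring. Qed.

Lemma tanh_quarter_ln K : 0 < K -> tanh (ln K / 4) = (sqrt K - 1) / (sqrt K + 1).
Proof.
intros HK. set (q := exp (ln K / 4)).
assert (Hq : 0 < q) by apply exp_pos.
assert (Hsqrt : sqrt K = q ^ 2).
{ rewrite <- (sqrt_pow2 (q ^ 2)) by nra. f_equal.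
  rewrite <- (exp_ln K) at 1 by exact HK.
  replace (ln K) with (ln K / 4 + ln K / 4 + ln K / 4 + ln K / 4) by field.
  rewrite !exp_plus. fold q. ring. }
rewrite Hsqrt. unfold tanh, sinh, cosh. rewrite exp_Ropp. fold q.
field. split; [nra |]. apply Rgt_not_eq.
assert (0 < / q) by (apply Rinv_0_lt_compat; lra).
lra.
Qed.

Lemma le_two_tanh_quarter_ln d K : 0 <= d < 2 -> ((2 + d) / (2 - d)) ^ 2 <= K ->
  d <= 2 * tanh (ln K / 4).
Proof.
intros Hd HK.
assert (Hr : 0 < (2 + d) / (2 - d)) by (apply Rdiv_lt_0_compat; lra).
rewrite tanh_quarter_ln by nra.
assert (Hq : (2 + d) / (2 - d) <= sqrt K).
{ rewrite <- (sqrt_pow2 ((2 + d) / (2 - d))) by lra. apply sqrt_le_1_alt, HK. }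
assert (Hq' : 2 + d <= sqrt K * (2 - d)) by (apply Rle_div_l; [lra | exact Hq]).
apply (Rmult_le_reg_r (sqrt K + 1)); [lra |].
replace (2 * ((sqrt K - 1) / (sqrt K + 1)) * (sqrt K + 1)) with (2 * (sqrt K - 1))
  by (field; lra).
lra.
Qed.

Lemma two_tanh_quarter_ln_sqr d : 0 <= d < 2 ->
  2 * tanh (ln (((2 + d) / (2 - d)) ^ 2) / 4) = d.
Proof.
intros Hd.
assert (Hr : 0 < (2 + d) / (2 - d)) by (apply Rdiv_lt_0_compat; lra).
rewrite tanh_quarter_ln, sqrt_pow2 by nra.
field. lra.
Qed.

(* With alpha = -t_u and beta = t_v - 1 (the distances from x to u and from y to v in units
   of |y - x|), the chord length is (1 + alpha + beta) d. *)
Lemma cross_ratio_chord_bound d t1 t2 : 0 < d < 2 -> t1 < 0 -> 1 < t2 ->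
  (t2 - t1) * d <= 2 -> ((2 + d) / (2 - d)) ^ 2 <= (1 - t1) * t2 / (- t1 * (t2 - 1)).
Proof.
intros Hd Ht1 Ht2 Hchord.
set (al := - t1). set (be := t2 - 1).
assert (Hal : 0 < al) by (unfold al; lra).
assert (Hbe : 0 < be) by (unfold be; lra).
assert (Hsum : (al + be) * d <= 2 - d) by (unfold al, be; lra).
assert (Hamgm : 4 * (al * be) <= (al + be) ^ 2) by (pose proof (pow2_ge_0 (al - be)); nra).
assert (Hsq : 2 * d * (al + be) ^ 2 <= (2 - d) ^ 2 * (1 + (al + be))).
{ assert ((2 - d) ^ 2 - (al + be) * (2 - d) * d >= 0) by nra. nra. }
assert (Hkey : (2 + d) ^ 2 * (al * be) <= (1 + al) * (1 + be) * (2 - d) ^ 2) by nra.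
replace ((1 - t1) * t2) with ((1 + al) * (1 + be)) by (unfold al, be; ring).
fold al be.
rewrite <- Rle_div_r by nra.
replace (((2 + d) / (2 - d)) ^ 2 * (al * be)) with ((2 + d) ^ 2 * (al * be) / (2 - d) ^ 2)
  by (field; lra).
apply Rle_div_l; nra.
Qed.

Lemma quadratic_roots_straddle a b c : 0 < a -> c < 0 -> a + b + c < 0 ->
  (- b - sqrt (b ^ 2 - 4 * a * c)) / (2 * a) < 0 /\
  1 < (- b + sqrt (b ^ 2 - 4 * a * c)) / (2 * a).
Proof.
intros Ha Hc Habc.
set (s := sqrt (b ^ 2 - 4 * a * c)).
assert (Hs2 : s ^ 2 = b ^ 2 - 4 * a * c) by (unfold s; rewrite pow2_sqrt; nra).
assert (Hs : 0 <= s) by apply sqrt_pos.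
assert (Hbs : - b < s /\ b < s) by (split; nra).
split.
- apply Rdiv_neg_pos; lra.
- apply Rlt_div_r; [lra |].
  destruct (Rle_lt_dec (2 * a + b) 0); [lra | nra].
Qed.

Lemma quadratic_root_gap a b c : 0 < a -> b ^ 2 - 4 * a * c <= 4 * a ->
  ((- b + sqrt (b ^ 2 - 4 * a * c)) / (2 * a) - (- b - sqrt (b ^ 2 - 4 * a * c)) / (2 * a))
    * sqrt a <= 2.
Proof.
intros Ha Hdisc.
set (s := sqrt (b ^ 2 - 4 * a * c)).
assert (Hqa : 0 < sqrt a) by (apply sqrt_lt_R0; lra).
assert (Hs : s <= 2 * sqrt a).
{ replace (2 * sqrt a) with (sqrt (4 * a)).
  - apply sqrt_le_1_alt, Hdisc.
  - rewrite sqrt_mult by lra. replace 4 with (2 ^ 2) by ring. rewrite sqrt_pow2; lra. }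
assert (Ha2 : sqrt a * sqrt a = a) by (apply sqrt_sqrt; lra).
replace (((- b + s) / (2 * a) - (- b - s) / (2 * a)) * sqrt a) with (s * sqrt a / a)
  by (field; lra).
apply Rle_div_l; nra.
Qed.

Lemma Cmod_sqr z : Cmod z ^ 2 = fst z ^ 2 + snd z ^ 2.
Proof. unfold Cmod. rewrite pow2_sqrt; [reflexivity | nra]. Qed.

Lemma Cmod_sub_lt_2 x y : in_disk x -> in_disk y -> Cmod (x - y)%C < 2.
Proof.
unfold in_disk. intros Hx Hy.
assert (Cmod (x - y)%C <= Cmod x + Cmod y) by (rewrite <- (Cmod_opp y); apply Cmod_triangle).
lra.
Qed.

Lemma Cmod_sub_sym x y : Cmod (y - x)%C = Cmod (x - y)%C.
Proof.
rewrite <- Cmod_opp. f_equal.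
destruct x, y. apply injective_projections; simpl; ring.
Qed.

Lemma Cmod_sub_pos x y : x <> y -> 0 < Cmod (x - y)%C.
Proof.
intros Hxy. apply Cmod_gt_0. intro E. apply Hxy.
destruct x as [x1 x2], y as [y1 y2]. injection E. intros. f_equal; lra.
Qed.

Lemma hq_a_eq x y : hq_a x y = Cmod (x - y)%C ^ 2.
Proof. unfold hq_a. now rewrite Cmod_sub_sym. Qed.

(* The quadratic a t^2 + b t + c is |x + t (y - x)|^2 - 1: it is negative at t = 0 and
   t = 1, and its discriminant is at most 4a by Cauchy-Schwarz. *)
Lemma disk_quadratic_facts x y : in_disk x -> in_disk y ->
  hq_c x < 0 /\ hq_a x y + hq_b x y + hq_c x < 0 /\
  hq_disc x y <= 4 * hq_a x y.
Proof.
unfold in_disk. intros Hx Hy. unfold hq_disc, hq_a, hq_b, hq_c.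
pose proof (Cmod_ge_0 x) as Hx0. pose proof (Cmod_ge_0 y) as Hy0.
assert (Hx2 : Cmod x ^ 2 < 1) by nra.
assert (Hy2 : Cmod y ^ 2 < 1) by nra.
rewrite !Cmod_sqr in *.
destruct x as [x1 x2], y as [y1 y2]. simpl in *.
pose proof (pow2_ge_0 (x1 * (y2 - x2) - x2 * (y1 - x1))).
repeat split; nra.
Qed.

Section DiskChord.

Variables x y : C.
Hypotheses (Hx : in_disk x) (Hy : in_disk y) (Hxy : x <> y).

Local Notation d := (Cmod (x - y)%C).

Lemma disk_chord_params : t_u x y < 0 /\ 1 < t_v x y /\ (t_v x y - t_u x y) * d <= 2.
Proof.
destruct (disk_quadratic_facts x y Hx Hy) as (Hc & Habc & Hdisc).
assert (Ha : 0 < hq_a x y) by (rewrite hq_a_eq; pose proof (Cmod_sub_pos x y Hxy); nra).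
destruct (quadratic_roots_straddle _ _ _ Ha Hc Habc) as [Hu Hv].
pose proof (quadratic_root_gap _ _ _ Ha Hdisc) as Hgap.
assert (Hsqrt : sqrt (hq_a x y) = d)
  by (rewrite hq_a_eq; apply sqrt_pow2; pose proof (Cmod_sub_pos x y Hxy); lra).
rewrite Hsqrt in Hgap.
unfold t_u, t_v, hq_disc. auto.
Qed.

Definition disk_cross_ratio : R :=
  (1 - t_u x y) * t_v x y / (- t_u x y * (t_v x y - 1)).

Lemma hilbert_disk_ln_cross_ratio : hilbert_disk x y = ln disk_cross_ratio.
Proof.
destruct disk_chord_params as (Hu & Hv & _).
pose proof (Cmod_sub_pos x y Hxy) as Hd.
assert (Hdist : forall (t : R) (z : C), z = (RtoC t * (y - x))%C -> Cmod z = Rabs t * d).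
{ intros t z ->. rewrite Cmod_mult, Cmod_R, Cmod_sub_sym. reflexivity. }
unfold hilbert_disk. destruct (Ceq_dec x y) as [E | _]; [contradiction |].
rewrite (Hdist (t_u x y - 1) (end_u x y - y)%C), (Hdist (- t_v x y) (x - end_v x y)%C),
  (Hdist (t_u x y) (end_u x y - x)%C), (Hdist (1 - t_v x y) (y - end_v x y)%C)
  by (unfold end_u, end_v; destruct x, y; apply injective_projections; simpl; ring).
unfold disk_cross_ratio.
set (T1 := t_u x y) in *. set (T2 := t_v x y) in *.
rewrite (Rabs_left (T1 - 1)), (Rabs_left (- T2)), (Rabs_left T1), (Rabs_left (1 - T2))
  by lra.
f_equal. field. split; lra.
Qed.

Lemma disk_cross_ratio_lower_bound : ((2 + d) / (2 - d)) ^ 2 <= disk_cross_ratio.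
Proof.
destruct disk_chord_params as (Hu & Hv & Hchord).
apply cross_ratio_chord_bound; auto.
split; [apply Cmod_sub_pos; exact Hxy | apply Cmod_sub_lt_2; auto].
Qed.

End DiskChord.

(* For x = -y the line passes through the centre, so t_u and t_v are symmetric about 1/2. *)
Lemma disk_cross_ratio_antipodal y : in_disk y -> y <> 0%C ->
  disk_cross_ratio (- y) y = ((2 + Cmod (- y - y)%C) / (2 - Cmod (- y - y)%C)) ^ 2.
Proof.
intros Hy Hy0.
assert (Hxy : (- y)%C <> y).
{ intro E. apply Hy0. destruct y as [y1 y2]. injection E. intros.
  apply injective_projections; simpl; lra. }
pose proof (Cmod_sub_pos _ _ Hxy) as Hd.
assert (Hny : in_disk (- y)) by (unfold in_disk; rewrite Cmod_opp; exact Hy).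
pose proof (Cmod_sub_lt_2 _ _ Hny Hy) as Hd2.
pose proof (hq_a_eq (- y) y) as Ha.
set (d := Cmod (- y - y)%C) in *.
assert (Hb : hq_b (- y) y = - d ^ 2).
{ rewrite <- Ha. unfold hq_a, hq_b. rewrite Cmod_sqr. destruct y. simpl. ring. }
assert (Hc : hq_c (- y) = d ^ 2 / 4 - 1).
{ rewrite <- Ha. unfold hq_a, hq_c. rewrite !Cmod_sqr. destruct y. simpl. field. }
assert (Hs : sqrt (hq_disc (- y) y) = 2 * d).
{ unfold hq_disc. rewrite Ha, Hb, Hc.
  replace ((- d ^ 2) ^ 2 - 4 * d ^ 2 * (d ^ 2 / 4 - 1)) with ((2 * d) ^ 2) by field.
  apply sqrt_pow2. lra. }
unfold disk_cross_ratio, t_u, t_v. rewrite Hs, Ha, Hb.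
field. repeat split; nra.
Qed.

Theorem mainTheorem11 :
  forall x y : C, in_disk x -> in_disk y ->
    Cmod (x - y)%C <= 2 * tanh (hilbert_disk x y / 4) /\
    (x = Copp y -> Cmod (x - y)%C = 2 * tanh (hilbert_disk x y / 4)).
Proof.
intros x y Hx Hy.
destruct (Ceq_dec x y) as [<- | Hxy].
- unfold hilbert_disk. destruct (Ceq_dec x x) as [_ | Hne]; [| contradiction].
  replace (x - x)%C with (RtoC 0) by (destruct x; apply injective_projections; simpl; ring).
  rewrite Cmod_0, Rdiv_0_l, tanh_0. lra.
- assert (Hd : 0 <= Cmod (x - y)%C < 2)
    by (split; [apply Cmod_ge_0 | apply Cmod_sub_lt_2; assumption]).
  rewrite hilbert_disk_ln_cross_ratio by auto.
  split.
  + apply le_two_tanh_quarter_ln; auto.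
    apply disk_cross_ratio_lower_bound; auto.
  + intros ->.
    assert (Hy0 : y <> 0%C) by (intros ->; apply Hxy; apply injective_projections; simpl; lra).
    rewrite disk_cross_ratio_antipodal, two_tanh_quarter_ln_sqr by auto.
    reflexivity.
Qed.
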